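(* Let $c\ge2$, let $F$ be a standard $c$-coloring, and let $X_1\ne X_2\in\mathcal X_F$ with $F[X_1]$ monochromatic of color $c_1$ and $F[X_2]$ monochromatic of color $c_2$. Then: (i) if $X_1\cap X_2=\emptyset$, then $c_1=c_2$ and there is a matching $M\subseteq X_1\ast X_2$ such that all edges of $M$ have color $c_1$ and all edges of $(X_1\ast X_2)\setminus M$ have one common color $c_3\neq c_1$; (ii) if $X_1\cap X_2=\{v\}$, then $c_1=c_2$ and all edges of $(X_1\setminus\{v\})\ast(X_2\setminus\{v\})$ have one common color $c_3\neq c_1$; (iii) $|X_1\cap X_2|\ge2$ is impossible.
   Context: A $c$-coloring $F$ is a map from the $2$-subsets of a finite set $V(F)$ to $[c]$. $F$ is standard if it contains no induced copy of any coloring in $\hat K_{3,1}$ or $\hat K_{3,3}$, where: $\hat K_{3,1}$ is the family of $4$-vertex colorings consisting of a monochromatic triangle of color $a$ plus a vertex joined to it by either (two edges of color $a$ and one of color $b\ne a$), or (three edges of three distinct colors, one being $a$), or (two edges of color $b$ and one of color $d$, with $a,b,d$ distinct); $\hat K_{3,3}$ is the family of $6$-vertex colorings consisting of two disjoint triangles monochromatic in colors $a$ and $b$ with all nine edges between them of color $d$, $a,b,d$ distinct. $\mathcal X_F$ is the set of all inclusion-maximal vertex sets of size at least $\max(c+1,6)$ all of whose pairs have the same color. For disjoint $S_1,S_2$, $S_1\ast S_2=\{\{v_1,v_2\}: v_1\in S_1,v_2\in S_2\}$. *)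

From mathcomp Require Import all_boot.
Set Implicit Arguments. Unset Strict Implicit. Unset Printing Implicit Defensive.

(* A c-coloring on the finite vertex set T: F : T -> T -> 'I_c, symmetric;
   only values F x y with x != y are meaningful (colors of 2-subsets). *)
Definition coloring_sym (T : finType) (c : nat) (F : T -> T -> 'I_c) : Prop :=
  forall x y, F x y = F y x.

(* induced copy of a member of \hat K_{3,1}:
   triangle x,y,z monochromatic of color a, plus a vertex w *)
Definition has_K31 (T : finType) (c : nat) (F : T -> T -> 'I_c) : Prop :=
  exists (x y z w : T) (a b d : 'I_c),
    [/\ uniq [:: x; y; z; w], F x y = a, F y z = a, F x z = a &
      [\/ [/\ F w x = a, F w y = a, F w z = b & b != a],
          [/\ F w x = a, F w y = b, F w z = d & uniq [:: a; b; d]] |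
          [/\ F w x = b, F w y = b, F w z = d & uniq [:: a; b; d]]]].

Definition has_K33 (T : finType) (c : nat) (F : T -> T -> 'I_c) : Prop :=
  exists (x1 x2 x3 y1 y2 y3 : T) (a b d : 'I_c),
    [/\ uniq [:: x1; x2; x3; y1; y2; y3], uniq [:: a; b; d],
        [/\ F x1 x2 = a, F x2 x3 = a & F x1 x3 = a],
        [/\ F y1 y2 = b, F y2 y3 = b & F y1 y3 = b] &
        forall x y, x \in [:: x1; x2; x3] -> y \in [:: y1; y2; y3] -> F x y = d].

Definition standard (T : finType) (c : nat) (F : T -> T -> 'I_c) : Prop :=
  ~ has_K31 F /\ ~ has_K33 F.

Definition mono_col (T : finType) (c : nat) (F : T -> T -> 'I_c) (S : {set T})
  (col : 'I_c) : Prop :=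
  forall x y, x \in S -> y \in S -> x != y -> F x y = col.

Definition mono (T : finType) (c : nat) (F : T -> T -> 'I_c) (S : {set T}) : Prop :=
  exists col, mono_col F S col.

Definition in_XF (T : finType) (c : nat) (F : T -> T -> 'I_c) (X : {set T}) : Prop :=
  [/\ mono F X, maxn c.+1 6 <= #|X| &
      forall Y : {set T}, X \subset Y -> maxn c.+1 6 <= #|Y| -> mono F Y -> Y = X].

(* M is a matching contained in X1 * X2 (edges stored as pairs (u,v), u in X1, v in X2) *)
Definition matching_between (T : finType) (X1 X2 : {set T}) (M : {set T * T}) : Prop :=
  (forall e, e \in M -> e.1 \in X1 /\ e.2 \in X2) /\
  (forall e f, e \in M -> f \in M -> e != f -> e.1 != f.1 /\ e.2 != f.2).

From mathcomp Require Import all_boot zify.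
Set Implicit Arguments. Unset Strict Implicit. Unset Printing Implicit Defensive.

(* Let X in X_F have color a and let w be outside X.  Forbidding \hat K_{3,1} on
   the triangles of X constrains the edges from w to X: at most one of them has
   color a (two would spread a to all of X, so X + w would be monochromatic, against
   maximality), and all the others share one color (two different ones would make
   the colors seen from w pairwise distinct and different from a, which |X| > c
   forbids).  Applied from both sides to X1 \ X2 and X2 \ X1, this makes all cross
   edges avoiding c1 and c2 equally colored.  If c1 <> c2, at most one vertex of X1
   has a c1-edge into X2 and at most one vertex of X2 has a c2-edge into X1;
   removing them leaves a \hat K_{3,3}.  Once c1 = c2, the cross edges of that
   color form a matching and all the others share one color.  Two common vertices
   would force c1 = c2 and a vertex of X2 \ X1 with two c1-edges into X1. *)

Lemma leq_card_setD (T : finType) (A B : {set T}) : #|A| - #|B| <= #|A :\: B|.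
Proof. by rewrite cardsD leq_sub2l // subset_leq_card // subsetIr. Qed.

Lemma setD_meet1 (T : finType) (A B : {set T}) v : A :&: B = [set v] -> A :\ v = A :\: B.
Proof.
move=> ABv; apply/setP => x; move/setP/(_ x): ABv; rewrite !inE.
by case: (x \in A); case: (x \in B); case: (x == v).
Qed.

Section Coloring.

Variables (T : finType) (c : nat) (F : T -> T -> 'I_c).
Hypotheses (F_sym : coloring_sym F) (noK31 : ~ has_K31 F) (noK33 : ~ has_K33 F).

Lemma in_XF_card X : in_XF F X -> 6 <= #|X| /\ c < #|X|.
Proof. by case=> _ Xbig _; split; apply: leq_trans Xbig; rewrite leq_max leqnn ?orbT. Qed.

Lemma K33_of_cross_color (A1 A2 : {set T}) c1 c2 d :
  [disjoint A1 & A2] -> 2 < #|A1| -> 2 < #|A2| ->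
  mono_col F A1 c1 -> mono_col F A2 c2 -> uniq [:: c1; c2; d] ->
  (forall u w, u \in A1 -> w \in A2 -> F u w = d) -> has_K33 F.
Proof.
move=> A12 /card_gt2P[p1 [p2 [p3 [[pA1 pA2 pA3] [p12 p23 p31]]]]].
move=> /card_gt2P[q1 [q2 [q3 [[qA1 qA2 qA3] [q12 q23 q31]]]]] A1c1 A2c2 cd cross.
exists p1, p2, p3, q1, q2, q3, c1, c2, d; split=> //.
- rewrite -[[:: _; _; _; _; _; _]]/([:: p1; p2; p3] ++ [:: q1; q2; q3]) cat_uniq.
  apply/and3P; split; [by rewrite /= !inE !negb_or p12 p23 eq_sym p31 | |
    by rewrite /= !inE !negb_or q12 q23 eq_sym q31].
  apply/hasPn => q qs; apply/negP => qps.
  have qA : q \in A2 by move: qs; rewrite !inE => /or3P[]/eqP->.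
  by move: qps; rewrite !inE => /or3P[]/eqP qp; rewrite -qp (disjointFl A12 qA) in pA1 pA2 pA3.
- by split; apply: A1c1; rewrite // eq_sym.
- by split; apply: A2c2; rewrite // eq_sym.
- by move=> x y; rewrite !inE => /or3P[]/eqP-> /or3P[]/eqP->; apply: cross.
Qed.

Section ExtremalSet.

Variables (X : {set T}) (a : 'I_c).
Hypotheses (XF : in_XF F X) (Xa : mono_col F X a).

Section OutsideVertex.

Variable w : T.
Hypothesis wX : w \notin X.

Lemma K31_outside p q r b d :
  p \in X -> q \in X -> r \in X -> [/\ p != q, q != r & p != r] ->
  [\/ [/\ F w p = a, F w q = a, F w r = b & b != a],
      [/\ F w p = a, F w q = b, F w r = d & uniq [:: a; b; d]] |
      [/\ F w p = b, F w q = b, F w r = d & uniq [:: a; b; d]]] -> False.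
Proof.
move=> pX qX rX [pq qr pr] Fw; apply: noK31; exists p, q, r, w, a, b, d.
have wpqr : w \notin [:: p; q; r].
  by apply: contra wX; rewrite !inE => /or3P[]/eqP->.
split; [|exact: Xa..|by []].
by rewrite -[[:: _; _; _; _]]/(rcons [:: p; q; r] w) rcons_uniq wpqr /= !inE !negb_or pq pr qr.
Qed.

Lemma outside_a_propagates p q r :
  p \in X -> q \in X -> r \in X -> [/\ p != q, q != r & p != r] ->
  F w p = a -> F w q = a -> F w r = a.
Proof.
move=> pX qX rX pqr wp wq; case: (F w r =P a) => // /eqP wr.
by case: (K31_outside (b := F w r) (d := a) pX qX rX pqr); apply: Or31.
Qed.

Lemma outside_rainbow p q r :
  p \in X -> q \in X -> r \in X -> [/\ p != q, q != r & p != r] ->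
  F w p != a -> F w q != a -> F w p != F w q ->
  [&& F w r != a, F w r != F w p & F w r != F w q].
Proof.
move=> pX qX rX [pq qr pr] wpa wqa wpq.
have rainbow b d : b != a -> d != a -> b != d -> uniq [:: a; b; d].
  by move=> ba da bd; rewrite /= !inE !negb_or ![a == _]eq_sym ba da bd.
case: (F w r =P a) => [wr|/eqP wra].
  case: (K31_outside (b := F w p) (d := F w q) rX pX qX); first by split; rewrite // eq_sym.
  by apply: Or32; split; rewrite ?rainbow.
case: (F w r =P F w p) => [wr|/eqP wrp].
  case: (K31_outside (b := F w p) (d := F w q) pX rX qX); first by split; rewrite // eq_sym.
  by apply: Or33; split; rewrite ?rainbow.
case: (F w r =P F w q) => [wr|/eqP wrq]; last by apply/and3P.
case: (K31_outside (b := F w q) (d := F w p) qX rX pX); first by split; rewrite // eq_sym.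
by apply: Or33; split; rewrite ?rainbow // eq_sym.
Qed.

Lemma outside_a_edge_unique x y :
  x \in X -> y \in X -> F w x = a -> F w y = a -> x = y.
Proof.
move=> xX yX wx wy; case: (x =P y) => // /eqP xy; exfalso.
have wXa z : z \in X -> F w z = a.
  move=> zX; case: (z =P x) => [->//|/eqP zx]; case: (z =P y) => [->//|/eqP zy].
  by apply: (outside_a_propagates xX yX zX _ wx wy); split; rewrite // eq_sym.
have wXmono : mono F (w |: X).
  exists a => p q; rewrite !inE => /predU1P[->|pX] /predU1P[->|qX] pq.
  - by rewrite eqxx in pq.
  - exact: wXa.
  - by rewrite F_sym wXa.
  - exact: Xa.
case: XF => _ Xbig Xmax; have wXsup := subsetUr [set w] X.
have wXE := Xmax _ wXsup (leq_trans Xbig (subset_leq_card wXsup)) wXmono.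
by move: wX; rewrite -wXE setU11.
Qed.

Lemma outside_off_color_eq x y :
  x \in X -> y \in X -> F w x != a -> F w y != a -> F w x = F w y.
Proof.
move=> xX yX wxa wya; case: (F w x =P F w y) => // /eqP wxy; exfalso.
have xy : x != y by apply: contra_neq wxy => ->.
have off z : z \in X -> F w z != a.
  move=> zX; case: (z =P x) => [->//|/eqP zx]; case: (z =P y) => [->//|/eqP zy].
  have xyz : [/\ x != y, y != z & x != z] by split; rewrite // eq_sym.
  by case/and3P: (outside_rainbow xX yX zX xyz wxa wya wxy).
have inj : {in X &, injective (F w)}.
  move=> z z' zX z'X wzz'; case: (z =P z') => // /eqP zz'; exfalso.
  have [t tX wtz] : exists2 t, t \in X & F w t != F w z.
    case: (F w x =P F w z) => [wxz|/eqP]; last by exists x.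
    by exists y; rewrite // -wxz eq_sym.
  have tz : t != z by apply: contra_neq wtz => ->.
  have tz' : t != z' by apply: contra_neq wtz => ->.
  case/and3P: (outside_rainbow tX zX z'X (And3 tz zz' tz') (off t tX) (off z zX) wtz).
  by rewrite wzz' eqxx.
have imX : F w @: X \subset [set~ a].
  by apply/subsetP => _ /imsetP[z zX ->]; rewrite !inE off.
have := subset_leq_card imX; rewrite card_in_imset // cardsC1 card_ord.
by have [_] := in_XF_card XF; lia.
Qed.

End OutsideVertex.

Lemma card_outside_a_edges w : w \notin X -> #|[set z in X | F w z == a]| <= 1.
Proof.
move=> wX; apply/card_le1_eqP => x y; rewrite !inE => /andP[xX /eqP wx] /andP[yX /eqP wy].
by rewrite (outside_a_edge_unique wX xX yX wx wy).
Qed.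

Lemma exists_off_color_pair D u u' : #|X :&: D| <= 1 -> u \notin X -> u' \notin X ->
  exists2 z, z \in X :\: D & (F u z != a) && (F u' z != a).
Proof.
move=> XD uX u'X; pose N v := [set z in X | F v z == a].
have /card_gt0P[z] : 0 < #|X :\: D :\: N u :\: N u'|.
  have := leq_card_setD (X :\: D :\: N u) (N u'); have := leq_card_setD (X :\: D) (N u).
  have : #|N u| <= 1 := card_outside_a_edges uX.
  have : #|N u'| <= 1 := card_outside_a_edges u'X.
  have := cardsD X D; have [X6 _] := in_XF_card XF; lia.
rewrite !inE => /and4P[u'z uz zD zX]; exists z; first by rewrite inE zD.
by move: u'z uz; rewrite zX /= => -> ->.
Qed.

End ExtremalSet.

Lemma XF_meet_card_le1 X1 X2 c1 c2 :
  in_XF F X1 -> in_XF F X2 -> mono_col F X1 c1 -> mono_col F X2 c2 ->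
  X1 != X2 -> #|X1 :&: X2| <= 1.
Proof.
move=> X1F X2F X1c1 X2c2 X1X2; rewrite leqNgt; apply/negP.
case/card_gt1P => u [v [/setIP[u1 u2] /setIP[v1 v2] uv]].
have [w w2 w1] : exists2 w, w \in X2 & w \notin X1.
  apply/subsetPn; apply: contra X1X2 => X21; case: X2F => _ _ X2max.
  by rewrite (X2max X1 X21) ?eqxx //; [case: X1F | exists c1].
have wu : w != u by apply: contraNneq w1 => ->.
have wv : w != v by apply: contraNneq w1 => ->.
have c12 : c1 = c2 by rewrite -(X1c1 u v) // (X2c2 u v).
have wu1 : F w u = c1 by rewrite c12 X2c2.
have wv1 : F w v = c1 by rewrite c12 X2c2.
by rewrite (outside_a_edge_unique X1F X1c1 w1 u1 v1 wu1 wv1) eqxx in uv.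
Qed.

Lemma card_XF_setD X1 X2 : in_XF F X1 -> #|X1 :&: X2| <= 1 -> 4 < #|X1 :\: X2|.
Proof. by move=> /in_XF_card[X16 _] X12; rewrite cardsD; lia. Qed.

Section TwoExtremalSets.

Variables (X1 X2 : {set T}) (c1 c2 : 'I_c).
Hypotheses (X1F : in_XF F X1) (X2F : in_XF F X2).
Hypotheses (X1c1 : mono_col F X1 c1) (X2c2 : mono_col F X2 c2).

Lemma cross_color_link u u' w w' :
  u \in X1 -> u \notin X2 -> u' \in X1 -> w \in X2 -> w' \in X2 -> w' \notin X1 ->
  F u w != c2 -> F u w' != c2 -> F u w' != c1 -> F u' w' != c1 ->
  F u w = F u' w'.
Proof.
move=> u1 u2 u'1 w2 w'2 w'1 uwc2 uw'c2 uw'c1 u'w'c1.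
rewrite (outside_off_color_eq X2F X2c2 u2 w2 w'2 uwc2 uw'c2) F_sym [F u' w']F_sym.
by apply: (outside_off_color_eq X1F X1c1 w'1 u1 u'1); rewrite F_sym.
Qed.

Hypothesis X12 : #|X1 :&: X2| <= 1.

Lemma c1_edges_share_endpoint u u' w w' : c1 != c2 ->
  u \in X1 :\: X2 -> u' \in X1 :\: X2 -> w \in X2 -> w' \in X2 ->
  F u w = c1 -> F u' w' = c1 -> u = u'.
Proof.
move=> c12 /setDP[u1 u2] /setDP[u'1 u'2] w2 w'2 uw u'w'.
have X21 : #|X2 :&: X1| <= 1 by rewrite setIC.
have [z /setDP[z2 z1] /andP[uz u'z]] := exists_off_color_pair X2F X2c2 X21 u2 u'2.
have c1Nc2 x y : F x y = c1 -> F x y != c2 by move->.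
have uz1 : F u z = c1.
  by rewrite -uw (outside_off_color_eq X2F X2c2 u2 z2 w2 uz (c1Nc2 _ _ uw)).
have u'z1 : F u' z = c1.
  by rewrite -u'w' (outside_off_color_eq X2F X2c2 u'2 z2 w'2 u'z (c1Nc2 _ _ u'w')).
by apply: (outside_a_edge_unique X1F X1c1 z1 u1 u'1); rewrite F_sym.
Qed.

Lemma card_c1_edge_ends : c1 != c2 ->
  #|[set u in X1 :\: X2 | [exists w in X2, F u w == c1]]| <= 1.
Proof.
move=> c12; apply/card_le1_eqP => x y; rewrite !inE -!andbA.
move=> /and3P[xX2 x1 /exists_inP[w w2 /eqP xw]] /and3P[yX2 y1 /exists_inP[w' w'2 /eqP yw']].
by apply: (c1_edges_share_endpoint c12 _ _ w'2 w2 yw' xw); apply/setDP.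
Qed.

End TwoExtremalSets.

Section ColorsAgree.

Variables (X1 X2 : {set T}) (c1 c2 : 'I_c).
Hypotheses (X1F : in_XF F X1) (X2F : in_XF F X2).
Hypotheses (X1c1 : mono_col F X1 c1) (X2c2 : mono_col F X2 c2).

Lemma XF_meet1_same_color v : X1 :&: X2 = [set v] -> c1 = c2.
Proof.
move=> X12v; have X12 : #|X1 :&: X2| <= 1 by rewrite X12v cards1.
have /setIP[v1 v2] : v \in X1 :&: X2 by rewrite X12v set11.
apply/eqP/contraT => c12.
have /card_gt1P[u [u' [uA u'A uu']]] : 1 < #|X1 :\: X2|.
  by have := card_XF_setD X1F X12; lia.
have /setDP[u1 u2] := uA; have /setDP[u'1 u'2] := u'A.
have uv : u != v by apply: contraNneq u2 => ->.
have u'v : u' != v by apply: contraNneq u'2 => ->.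
have := c1_edges_share_endpoint X1F X2F X1c1 X2c2 X12 c12 uA u'A v2 v2.
by rewrite !X1c1 // => /(_ erefl erefl) /eqP; rewrite (negPf uu').
Qed.

Lemma XF_disjoint_same_color : X1 :&: X2 = set0 -> c1 = c2.
Proof.
move=> X12; case: (c1 =P c2) => // /eqP c12; exfalso; apply: noK33.
have X12le : #|X1 :&: X2| <= 1 by rewrite X12 cards0.
have X21le : #|X2 :&: X1| <= 1 by rewrite setIC X12 cards0.
have X1D : X1 :\: X2 = X1 by apply/setDidPl; rewrite -setI_eq0 X12.
have X2D : X2 :\: X1 = X2 by apply/setDidPl; rewrite -setI_eq0 setIC X12.
pose S1 := [set u in X1 | [exists w in X2, F u w == c1]].
pose S2 := [set w in X2 | [exists u in X1, F w u == c2]].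
have S1le : #|S1| <= 1.
  by rewrite /S1 -{1}X1D; apply: (card_c1_edge_ends X1F X2F X1c1 X2c2 X12le c12).
have S2le : #|S2| <= 1.
  by rewrite /S2 -{1}X2D; apply: (card_c1_edge_ends X2F X1F X2c2 X1c1 X21le); rewrite eq_sym.
have A1big : 2 < #|X1 :\: S1|.
  by have := leq_card_setD X1 S1; have [X16 _] := in_XF_card X1F; lia.
have A2big : 2 < #|X2 :\: S2|.
  by have := leq_card_setD X2 S2; have [X26 _] := in_XF_card X2F; lia.
have off u w : u \in X1 :\: S1 -> w \in X2 :\: S2 -> (F u w != c1) && (F u w != c2).
  move=> /setDP[u1 uS1] /setDP[w2 wS2]; rewrite !inE u1 w2 /= in uS1 wS2.
  apply/andP; split; first by apply: contra uS1 => uw; apply/exists_inP; exists w.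
  by apply: contra wS2 => uw; apply/exists_inP; exists u; rewrite // F_sym.
have [p pA] : exists p, p \in X1 :\: S1 by apply/card_gt0P; lia.
have [q qA] : exists q, q \in X2 :\: S2 by apply/card_gt0P; lia.
have /andP[pqc1 pqc2] := off p q pA qA.
apply: (K33_of_cross_color (d := F p q) _ A1big A2big).
- by apply: disjointW (subsetDl _ _) (subsetDl _ _) _; rewrite -setI_eq0 X12.
- by move=> x y /setDP[x1 _] /setDP[y1 _]; apply: X1c1.
- by move=> x y /setDP[x2 _] /setDP[y2 _]; apply: X2c2.
- by rewrite /= !inE !negb_or c12 !(eq_sym _ (F p q)) pqc1 pqc2.
move=> u w uA wA; have /andP[_ uwc2] := off u w uA wA.
have /andP[uqc1 uqc2] := off u q uA qA.
have /setDP[u1 _] := uA; have /setDP[w2 _] := wA.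
have /setDP[p1 _] := pA; have /setDP[q2 _] := qA.
have nX12 x : x \in X1 -> x \notin X2 by rewrite -X1D => /setDP[].
have nX21 x : x \in X2 -> x \notin X1 by rewrite -X2D => /setDP[].
exact: (cross_color_link X1F X2F X1c1 X2c2 u1 (nX12 _ u1) p1 w2 q2 (nX21 _ q2)
  uwc2 uqc2 uqc1 pqc1).
Qed.

End ColorsAgree.

Section SameColor.

Variables (X1 X2 : {set T}) (a : 'I_c).
Hypotheses (X1F : in_XF F X1) (X2F : in_XF F X2).
Hypotheses (X1a : mono_col F X1 a) (X2a : mono_col F X2 a).
Hypothesis X12 : #|X1 :&: X2| <= 1.

Lemma cross_off_color_eq u u' w w' :
  u \in X1 :\: X2 -> u' \in X1 :\: X2 -> w \in X2 :\: X1 -> w' \in X2 :\: X1 ->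
  F u w != a -> F u' w' != a -> F u w = F u' w'.
Proof.
move=> /setDP[u1 u2] /setDP[u'1 u'2] /setDP[w2 _] /setDP[w'2 _] uw u'w'.
have X21 : #|X2 :&: X1| <= 1 by rewrite setIC.
have [z /setDP[z2 z1] /andP[uz u'z]] := exists_off_color_pair X2F X2a X21 u2 u'2.
rewrite (cross_color_link X1F X2F X1a X2a u1 u2 u'1 w2 z2 z1 uw uz uz u'z).
exact: (outside_off_color_eq X2F X2a u'2 z2 w'2 u'z u'w').
Qed.

Lemma exists_cross_off_color :
  exists u w, [/\ u \in X1 :\: X2, w \in X2 :\: X1 & F u w != a].
Proof.
have /card_gt0P[u uA] : 0 < #|X1 :\: X2| by have := card_XF_setD X1F X12; lia.
have X21 : #|X2 :&: X1| <= 1 by rewrite setIC.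
have uX2 : u \notin X2 by case/setDP: uA.
have [w wA /andP[uw _]] := exists_off_color_pair X2F X2a X21 uX2 uX2.
by exists u, w.
Qed.

Lemma XF_meet1_cross_color v : X1 :&: X2 = [set v] ->
  exists c3, c3 != a /\ forall u w, u \in X1 :\ v -> w \in X2 :\ v -> F u w = c3.
Proof.
move=> X12v; have /setIP[v1 v2] : v \in X1 :&: X2 by rewrite X12v set11.
rewrite (setD_meet1 X12v) (setD_meet1 (B := X1) (_ : X2 :&: X1 = [set v])); last first.
  by rewrite setIC.
have off u w : u \in X1 :\: X2 -> w \in X2 :\: X1 -> F u w != a.
  move=> /setDP[u1 u2] /setDP[w2 w1]; apply/eqP => uw.
  have uv : F u v = a by apply: X1a; rewrite // (contraNneq _ u2) // => ->.
  by move: w1; rewrite (outside_a_edge_unique X2F X2a u2 w2 v2 uw uv) v1.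
have [u0 [w0 [u0A w0A _]]] := exists_cross_off_color.
exists (F u0 w0); split => [|u w uA wA]; first exact: off.
by apply: cross_off_color_eq; rewrite ?off.
Qed.

Lemma XF_disjoint_matching : X1 :&: X2 = set0 ->
  exists (M : {set T * T}) (c3 : 'I_c),
    [/\ matching_between X1 X2 M, c3 != a,
        forall e, e \in M -> F e.1 e.2 = a &
        forall u v, u \in X1 -> v \in X2 -> (u, v) \notin M -> F u v = c3].
Proof.
move=> X120.
have X1D : X1 :\: X2 = X1 by apply/setDidPl; rewrite -setI_eq0 X120.
have X2D : X2 :\: X1 = X2 by apply/setDidPl; rewrite -setI_eq0 setIC X120.
have X1nX2 u : u \in X1 -> u \notin X2 by rewrite -X1D => /setDP[].
have X2nX1 w : w \in X2 -> w \notin X1 by rewrite -X2D => /setDP[].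
have [u0 [w0 [u0A w0A u0w0]]] := exists_cross_off_color.
exists [set e | [&& e.1 \in X1, e.2 \in X2 & F e.1 e.2 == a]], (F u0 w0); split => //.
- split=> [e|[e1 e2] [f1 f2]]; first by rewrite inE => /and3P[-> ->].
  rewrite !inE /= => /and3P[e1X e2X /eqP e12] /and3P[f1X f2X /eqP f12] ef.
  split; apply: contra_neq ef => E; rewrite -E in f12 *; congr (_, _).
    exact: (outside_a_edge_unique X2F X2a (X1nX2 _ e1X) e2X f2X e12 f12).
  by apply: (outside_a_edge_unique X1F X1a (X2nX1 _ e2X) e1X f1X); rewrite F_sym.
- by move=> e; rewrite inE => /and3P[_ _ /eqP].
- move=> u w u1 w2; rewrite inE /= u1 w2 /= => uw.
  by apply: (cross_off_color_eq _ u0A _ w0A uw u0w0); rewrite ?X1D ?X2D.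
Qed.

End SameColor.

End Coloring.

Theorem claim5p4 (T : finType) (c : nat) (F : T -> T -> 'I_c)
  (X1 X2 : {set T}) (c1 c2 : 'I_c) :
  2 <= c -> coloring_sym F -> standard F ->
  in_XF F X1 -> in_XF F X2 -> X1 != X2 ->
  mono_col F X1 c1 -> mono_col F X2 c2 ->
  [/\ (X1 :&: X2 = set0 ->
        c1 = c2 /\
        exists (M : {set T * T}) (c3 : 'I_c),
          [/\ matching_between X1 X2 M, c3 != c1,
              forall e, e \in M -> F e.1 e.2 = c1 &
              forall u v, u \in X1 -> v \in X2 -> (u, v) \notin M -> F u v = c3]),
      (forall v, X1 :&: X2 = [set v] ->
        c1 = c2 /\
        exists c3 : 'I_c, c3 != c1 /\
          forall u w, u \in X1 :\ v -> w \in X2 :\ v -> F u w = c3) &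
      #|X1 :&: X2| < 2].
Proof.
move=> _ F_sym [noK31 noK33] X1F X2F X1X2 X1c1 X2c2.
have X12 := XF_meet_card_le1 F_sym noK31 X1F X2F X1c1 X2c2 X1X2.
split=> [X120 | v X12v |]; last by [].
- have c12 := XF_disjoint_same_color F_sym noK31 noK33 X1F X2F X1c1 X2c2 X120.
  subst c2; split=> //; exact: (XF_disjoint_matching F_sym noK31 X1F X2F X1c1 X2c2 X12 X120).
- have c12 := XF_meet1_same_color F_sym noK31 X1F X2F X1c1 X2c2 X12v.
  subst c2; split=> //; exact: (XF_meet1_cross_color F_sym noK31 X1F X2F X1c1 X2c2 X12 X12v).
Qed.
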